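(* Let $k\ge1$, let $A,B_1,\dots,B_k,C_1,\dots,C_k\in\mathbb{C}^{r\times r}$ with $C_i+mI$ invertible for all integers $m\ge0$ and all $i$, and assume $AB_i=B_iA$, $B_iB_j=B_jB_i$, $C_iC_j=C_jC_i$ for all $i,j$. Let $n\ge1$ and suppose $A+mI$ is invertible for all $m\ge0$. Then $$F_{\mathcal A}[A+nI]=\sum_{N_k\le n}\binom{n}{n_1,\dots,n_k}\prod_{i=1}^k (B_i)_{n_i}x_i^{n_i}\;F_{\mathcal A}[A+N_kI,\,B_1+n_1I,\dots,B_k+n_kI,\,C_1+n_1I,\dots,C_k+n_kI]\;\prod_{i=1}^k (C_i)^{-1}_{n_i}.$$ Furthermore, if $A-n_1I$ is invertible for all $0\le n_1\le n$, then $$F_{\mathcal A}[A-nI]=\sum_{N_k\le n}\binom{n}{n_1,\dots,n_k}\prod_{i=1}^k (B_i)_{n_i}(-x_i)^{n_i}\;F_{\mathcal A}[B_1+n_1I,\dots,B_k+n_kI,\,C_1+n_1I,\dots,C_k+n_kI]\;\prod_{i=1}^k (C_i)^{-1}_{n_i}.$$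
   Context: For $M\in\mathbb{C}^{r\times r}$: $(M)_0=I$, $(M)_m=M(M+I)\cdots(M+(m-1)I)$, $(M)^{-1}_m=((M)_m)^{-1}$. $$F_{\mathcal A}=F_{\mathcal A}[A,B_1,\dots,B_k;C_1,\dots,C_k;x_1,\dots,x_k]=\sum_{m_1,\dots,m_k\ge0}(A)_{m_1+\cdots+m_k}\prod_{i=1}^k(B_i)_{m_i}\prod_{i=1}^k(C_i)^{-1}_{m_i}\prod_{i=1}^k\frac{x_i^{m_i}}{m_i!},$$ $x_i$ scalar variables, matrix products in order of increasing index; identities are of formal power series in the $x_i$. Bracket notation $F_{\mathcal A}[\dots]$ lists only the shifted parameters (others unchanged). The sum runs over all tuples $(n_1,\dots,n_k)$ of nonnegative integers with $N_k:=n_1+\cdots+n_k\le n$, and $\binom{n}{n_1,\dots,n_k}:=\frac{n!}{n_1!\cdots n_k!\,(n-N_k)!}$. In the second formula the parameter $A$ is unshifted. *)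

From HB Require Import structures.
From mathcomp Require Import all_boot all_order all_algebra.
From mathcomp Require Import reals.
From mathcomp Require Import complex.
Set Implicit Arguments. Unset Strict Implicit. Unset Printing Implicit Defensive.
Import Order.TTheory GRing.Theory Num.Theory.
Local Open Scope ring_scope.

Section Defs.
Variables (K : fieldType) (r k : nat).

Definition mxprod (M : 'I_k -> 'M[K]_r) : 'M[K]_r :=
  \big[mulmx/1%:M]_(i < k) M i.

Definition mpoch (M : 'M[K]_r) (m : nat) : 'M[K]_r :=
  \big[mulmx/1%:M]_(j < m) (M + (j%:R)%:M).

Definition mpochinv (M : 'M[K]_r) (m : nat) : 'M[K]_r := invmx (mpoch M m).

Definition mindex := {ffun 'I_k -> nat}.

Definition mtot (m : mindex) : nat := \sum_(i < k) m i.

(* formal power series in x_1..x_k with r x r matrix coefficients,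
   represented by their coefficient function: f m = coefficient of
   x_1^{m_1} ... x_k^{m_k} *)
Definition fps := mindex -> 'M[K]_r.

Definition FA (A : 'M[K]_r) (B C : 'I_k -> 'M[K]_r) : fps := fun m =>
  ((\prod_(i < k) (m i)`!)%N%:R)^-1 *:
    (mpoch A (mtot m) *m mxprod (fun i => mpoch (B i) (m i))
       *m mxprod (fun i => mpochinv (C i) (m i))).

(* coefficient at m of the series  P * x^nv * f * Q  (x^nv = prod x_i^{nv_i}) *)
Definition mono_mul (P : 'M[K]_r) (nv : mindex) (f : fps) (Q : 'M[K]_r) : fps :=
  fun m => if [forall i, (nv i <= m i)%N]
           then P *m f [ffun i => (m i - nv i)%N] *m Q else 0.

Definition multinom (n : nat) (nv : mindex) : nat :=
  (n`! %/ ((\prod_(i < k) (nv i)`!) * (n - mtot nv)`!))%N.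

End Defs.

From HB Require Import structures.
From mathcomp Require Import all_boot all_order all_algebra.
From mathcomp Require Import reals.
From mathcomp Require Import complex.
From mathcomp Require Import ring zify.
Import Order.TTheory GRing.Theory Num.Theory.
Local Open Scope ring_scope.
Set Implicit Arguments. Unset Strict Implicit. Unset Printing Implicit Defensive.

(* In the summand indexed by nv, the Pochhammer symbols of B_i and C_i
   recombine through (X)_v (X + v)_{m - v} = (X)_m, so its coefficient at x^m
   is the multinomial weight times (A')_{|m| - |nv|} (B)_m (C)^{-1}_m / (m - nv)!
   when nv <= m, and 0 otherwise.  Grouping the summands by N = |nv| and using
   the multivariate Vandermonde identity sum_{|nv| = N} prod_i C(m_i, nv_i)
   = C(|m|, N), the right-hand side becomes
     sum_N n^_N C(|m|, N) (A')_{|m| - N} (B)_m (C)^{-1}_m / m!,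
   and the theorem reduces to the Vandermonde formulas for rising factorials
     (x + n)_M = sum_N n^_N C(M, N) (x + N)_{M - N},
     (x - n)_M = sum_N (-1)^N n^_N C(M, N) (x)_{M - N},
   proved in any commutative ring and transported to A through horner_mx. *)

Section Rising.
Variable R : pzRingType.

Definition rising (x : R) (M : nat) : R := \prod_(j < M) (x + j%:R).

Lemma rising0 (x : R) : rising x 0 = 1.
Proof. by rewrite /rising big_ord0. Qed.

Lemma risingSr (x : R) M : rising x M.+1 = rising x M * (x + M%:R).
Proof. by rewrite /rising big_ord_recr. Qed.

Lemma risingSl (x : R) M : rising x M.+1 = x * rising (x + 1) M.
Proof.
rewrite /rising big_ord_recl /= addr0; congr (_ * _).
by apply: eq_bigr => j _; rewrite /bump /= add1n -nat1r addrA.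
Qed.

Lemma rising_split (x : R) a b : rising x (a + b) = rising x a * rising (x + a%:R) b.
Proof.
rewrite /rising big_split_ord /=; congr (_ * _).
by apply: eq_bigr => j _; rewrite natrD addrA.
Qed.

Lemma comm_rising (x y : R) a b : GRing.comm x y -> GRing.comm (rising x a) (rising y b).
Proof.
move=> cxy; apply: commr_prod => j _; apply/commr_sym/commr_prod => l _.
by apply/commrD/commr_nat; apply/commr_sym/commrD/commr_nat/commr_sym.
Qed.

End Rising.

Lemma rising_unit (R : unitRingType) (x : R) M :
  (forall j : nat, x + j%:R \is a GRing.unit) -> rising x M \is a GRing.unit.
Proof. by move=> xU; apply: unitr_prod => j _. Qed.

Lemma rmorph_rising (R S : pzRingType) (f : {rmorphism R -> S}) (x : R) M :
  f (rising x M) = rising (f x) M.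
Proof. by rewrite rmorph_prod; apply: eq_bigr => j _; rewrite rmorphD rmorph_nat. Qed.

Section RisingVandermonde.
Variable R : comPzRingType.

Lemma rising_shift (x : R) M : rising (x + 1) M = rising x M + M%:R * rising (x + 1) M.-1.
Proof.
case: M => [|M]; first by rewrite !rising0 mul0r addr0.
rewrite [rising (x + 1) _]risingSr [rising x _]risingSl /= -natr1; ring.
Qed.

Definition vcoef (n M N : nat) : nat := (n ^_ N * 'C(M, N))%N.

Lemma vcoef_step n M N : vcoef n.+1 M N.+1 = (vcoef n M N.+1 + vcoef n M N * (M - N))%N.
Proof.
rewrite /vcoef ffactSS ffactnSr -[in X in _ = _ + X]mulnA [(_ * (M - N))%N]mulnC -mul_bin_left.
case: (leqP N n) => [leNn | ltnN]; last by rewrite ffact_small // !(muln0, mul0n).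
have -> : n.+1 = (n - N + N.+1)%N by lia.
ring.
Qed.

Lemma vcoef_sum_step n M K (F : nat -> R) :
  \sum_(N < K.+1) (vcoef n.+1 M N)%:R * F N =
  \sum_(N < K.+1) (vcoef n M N)%:R * F N + \sum_(N < K) (vcoef n M N * (M - N))%:R * F N.+1.
Proof.
rewrite !big_ord_recl /= -addrA; congr (_ + _).
rewrite -big_split /=; apply: eq_bigr => j _.
by rewrite /bump /= add1n vcoef_step natrD mulrDl.
Qed.

(* Vandermonde formula for (x + n)_M; the terms with N > n vanish, so any
   summation range K > n may be used. *)
Lemma rising_addn n (x : R) M K : (n < K)%N ->
  rising (x + n%:R) M = \sum_(N < K) (vcoef n M N)%:R * rising (x + N%:R) (M - N).
Proof.
elim: n x K => [|n IH] x K ltnK.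
  case: K ltnK => // K _; rewrite big_ord_recl big1 => [|j _]; last first.
    by rewrite /vcoef ffact0n mul0n mul0r.
  by rewrite /vcoef /= bin0 addr0 subn0 mul1r addr0.
case: K ltnK => // K ltnK.
rewrite (vcoef_sum_step n M K (fun N => rising (x + N%:R) (M - N))) big_ord_recr /=.
rewrite [vcoef n M K]/vcoef ffact_small // mul0n mul0r addr0.
rewrite -natr1 addrA addrAC (IH _ _ ltnK) -big_split /=.
apply: eq_bigr => j _.
rewrite addrAC rising_shift mulrDr natrM -mulrA; congr (_ + _ * _).
by rewrite -natr1 addrA subnS.
Qed.

Lemma rising_subn n (x : R) M K : (n < K)%N ->
  rising (x - n%:R) M = \sum_(N < K) (vcoef n M N)%:R * ((-1) ^+ N * rising x (M - N)).
Proof.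
elim: n x K => [|n IH] x K ltnK.
  case: K ltnK => // K _; rewrite big_ord_recl big1 => [|j _]; last first.
    by rewrite /vcoef ffact0n mul0n mul0r.
  by rewrite /vcoef /= bin0 subr0 subn0 expr0 !mul1r addr0.
case: K ltnK => // K ltnK.
rewrite (vcoef_sum_step n M K (fun N => (-1) ^+ N * rising x (M - N))) big_ord_recr /=.
rewrite [vcoef n M K]/vcoef ffact_small // mul0n mul0r addr0.
rewrite -natr1 opprD addrA addrAC (IH _ _ ltnK) -big_split /=.
apply: eq_bigr => j _.
have shift_down : rising (x - 1) (M - j) = rising x (M - j) - (M - j)%:R * rising x (M - j.+1).
  by rewrite -[in RHS](subrK 1 x) rising_shift subrK subnS addrK.
rewrite shift_down natrM exprS; ring.
Qed.

End RisingVandermonde.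

Section MultiVandermonde.
Variable R : comNzRingType.

Definition eq_upto (n : nat) (p q : {poly R}) : Prop := forall j, (j <= n)%N -> p`_j = q`_j.

Lemma eq_uptoM n p p' q q' : eq_upto n p p' -> eq_upto n q q' -> eq_upto n (p * q) (p' * q').
Proof.
move=> pp' qq' j lejn; rewrite !coefM; apply: eq_bigr => i _.
have leij : (i <= n)%N by apply: leq_trans lejn; rewrite -ltnS.
by rewrite pp' // qq' // (leq_trans (leq_subr _ _) lejn).
Qed.

Lemma coef_1X_exp a j : ((1 + 'X) ^+ a)`_j = 'C(a, j)%:R :> R.
Proof.
elim: a j => [|a IH] j; first by rewrite expr0 coef1; case: j.
rewrite exprS mulrDl mul1r coefD coefXM IH; case: j => [|j] /=.
  by rewrite !bin0 addr0.
by rewrite IH binS natrD addrC.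
Qed.

(* Multivariate Vandermonde identity, with the summation indices bounded by n:
   compare the coefficients of X^N in prod_i (1 + X)^(m_i) and (1 + X)^(sum m_i). *)
Lemma vandermonde_multi k n (m : 'I_k -> nat) N : (N <= n)%N ->
  \sum_(f : {ffun 'I_k -> 'I_n.+1} | \sum_i (f i : nat) == N)
     \prod_i 'C(m i, f i)%:R = 'C(\sum_i m i, N)%:R :> R.
Proof.
move=> leNn.
pose T i : {poly R} := \sum_(j : 'I_n.+1) 'C(m i, j)%:R *: 'X^j.
have expand : \prod_i T i = \sum_(f : {ffun 'I_k -> 'I_n.+1})
    (\prod_i 'C(m i, f i)%:R : R) *: 'X^(\sum_i (f i : nat)).
  rewrite /T bigA_distr_bigA /=; apply: eq_bigr => f _.
  rewrite -prodrXr -mul_polyC rmorph_prod -big_split /=.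
  by apply: eq_bigr => i _; rewrite mul_polyC.
have truncated : eq_upto n (\prod_i T i) ((1 + 'X) ^+ (\sum_i m i)).
  rewrite -prodrXr; apply: (big_ind2 (eq_upto n)) => //; first exact: eq_uptoM.
  move=> i _ j lejn; rewrite coef_1X_exp /T coef_sum.
  rewrite (bigD1 (Ordinal (lejn : (j < n.+1)%N))) //= coefZ coefXn eqxx mulr1.
  rewrite big1 ?addr0 // => l nelj; rewrite coefZ coefXn.
  by case: eqP => [eqjl|]; [move: nelj; rewrite -(inj_eq val_inj) /= eqjl eqxx | rewrite mulr0].
rewrite -coef_1X_exp -(truncated _ leNn) expand coef_sum big_mkcond /=.
by apply: eq_bigr => f _; rewrite coefZ coefXn eq_sym; case: eqP; rewrite ?mulr1 ?mulr0.
Qed.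

Lemma sum_by_total (V : lmodType R) k n (m : 'I_k -> nat) (g : nat -> V) :
  \sum_(f : {ffun 'I_k -> 'I_n.+1} | (\sum_i (f i : nat) <= n)%N)
     (\prod_i 'C(m i, f i))%N%:R *: g (\sum_i (f i : nat))%N
  = \sum_(N < n.+1) 'C(\sum_i m i, N)%:R *: g N.
Proof.
under [RHS]eq_bigr => N _.
  have leNn : (N <= n)%N by rewrite -ltnS.
  rewrite -(vandermonde_multi m leNn) scaler_suml.
  under eq_bigr => f /eqP sumfN do rewrite -sumfN -natr_prod.
  over.
rewrite (exchange_big_dep (fun f : {ffun 'I_k -> 'I_n.+1} => (\sum_i (f i : nat) <= n)%N)) /=; last first.
  by move=> N f _ /eqP ->; rewrite -ltnS.
apply: eq_bigr => f lefn.
by rewrite (big_pred1 (Ordinal (lefn : (\sum_i (f i : nat) < n.+1)%N))).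
Qed.

End MultiVandermonde.

Lemma mtot_sub k (v m : mindex k) : (forall i, v i <= m i)%N ->
  mtot [ffun i => (m i - v i)%N] = (mtot m - mtot v)%N.
Proof.
move=> levm; apply/eqP; rewrite -(eqn_add2r (mtot v)) subnK; last exact: leq_sum.
by rewrite /mtot -big_split /=; apply/eqP/eq_bigr => i _; rewrite ffunE subnK.
Qed.

Section MatrixPochhammer.
Variables (K : fieldType) (r k : nat).
Local Notation MX := 'M[K]_r.+1.

Lemma scalar_mx_nat (j : nat) : (j%:R)%:M = j%:R :> MX.
Proof. by rewrite -scalemx1 scaler_nat idmxE. Qed.

Lemma mpoch_rising (X : MX) M : mpoch X M = rising X M.
Proof. by rewrite /mpoch mulmxE idmxE; apply: eq_bigr => j _; rewrite scalar_mx_nat. Qed.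

Lemma mxprodE (F : 'I_k -> MX) : mxprod F = \prod_i F i.
Proof. by rewrite /mxprod mulmxE idmxE. Qed.

Lemma mpochinvE (X : MX) M : mpochinv X M = (mpoch X M)^-1.
Proof. by []. Qed.

Lemma mpoch_shift (X : MX) v m : (v <= m)%N ->
  mpoch X v * mpoch (X + (v%:R)%:M) (m - v) = mpoch X m.
Proof. by move=> levm; rewrite !mpoch_rising scalar_mx_nat -rising_split subnKC. Qed.

Lemma mpochinv_shift (X : MX) v m : (v <= m)%N ->
  (forall j : nat, X + j%:R \is a GRing.unit) ->
  mpochinv (X + (v%:R)%:M) (m - v) * mpochinv X v = mpochinv X m.
Proof.
move=> levm XU; rewrite !mpochinvE -invrM ?mpoch_shift // mpoch_rising rising_unit //.
by move=> j; rewrite scalar_mx_nat -addrA -natrD.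
Qed.

Lemma comm_mpoch (X Y : MX) a b : GRing.comm X Y -> GRing.comm (mpoch X a) (mpoch Y b).
Proof. by rewrite !mpoch_rising; apply: comm_rising. Qed.

Lemma comm_shift (X Y : MX) c : GRing.comm X Y -> GRing.comm X (Y + (c%:R)%:M).
Proof. by move=> cXY; rewrite scalar_mx_nat; apply/commrD/commr_nat. Qed.

Section ShiftedSeries.
Variables (B C : 'I_k -> MX) (v m : mindex k).
Hypothesis commB : forall i j, GRing.comm (B i) (B j).
Hypothesis commC : forall i j, GRing.comm (C i) (C j).
Hypothesis unitC : forall i (j : nat), C i + j%:R \is a GRing.unit.
Hypothesis levm : forall i, (v i <= m i)%N.

Lemma mxprod_mpoch_shift :
  mxprod (fun i => mpoch (B i) (v i)) *
  mxprod (fun i => mpoch (B i + ((v i)%:R)%:M) ([ffun i => m i - v i]%N i))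
  = mxprod (fun i => mpoch (B i) (m i)).
Proof.
rewrite !mxprodE -prodrM_comm => [|i j _ _]; last exact/comm_mpoch/comm_shift.
by apply: eq_bigr => i _; rewrite ffunE mpoch_shift.
Qed.

Lemma mxprod_mpochinv_shift :
  mxprod (fun i => mpochinv (C i + ((v i)%:R)%:M) ([ffun i => m i - v i]%N i)) *
  mxprod (fun i => mpochinv (C i) (v i))
  = mxprod (fun i => mpochinv (C i) (m i)).
Proof.
rewrite !mxprodE -prodrM_comm => [|i j _ _]; last first.
  by rewrite !mpochinvE; apply/commrV/commr_sym/commrV/comm_mpoch/comm_shift.
by apply: eq_bigr => i _; rewrite ffunE mpochinv_shift.
Qed.

Lemma mono_mul_FA (A' : MX) : (forall i, GRing.comm A' (B i)) ->
  mono_mul (mxprod (fun i => mpoch (B i) (v i))) v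
     (FA A' (fun i => B i + ((v i)%:R)%:M) (fun i => C i + ((v i)%:R)%:M))
     (mxprod (fun i => mpochinv (C i) (v i))) m
  = ((\prod_i (m i - v i)`!)%N%:R)^-1 *:
      (mpoch A' (mtot m - mtot v) *m mxprod (fun i => mpoch (B i) (m i))
         *m mxprod (fun i => mpochinv (C i) (m i))).
Proof.
move=> commAB; rewrite /mono_mul; have -> : [forall i, (v i <= m i)%N] by apply/forallP.
rewrite /FA -scalemxAr -scalemxAl mtot_sub //; congr (_ *: _).
  by congr (_^-1); congr (_%:R); apply: eq_bigr => i _; rewrite ffunE.
have commPA : GRing.comm (mxprod (fun i => mpoch (B i) (v i))) (mpoch A' (mtot m - mtot v)).
  by rewrite mxprodE; apply/commr_sym/commr_prod => i _; apply/comm_mpoch/commAB.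
rewrite !mulmxE !mulrA commPA -(mulrA (mpoch A' _)) mxprod_mpoch_shift.
by rewrite -mulrA mxprod_mpochinv_shift.
Qed.

End ShiftedSeries.
End MatrixPochhammer.

(* The multinomial coefficient is an integer: prod_i a_i! divides (sum_i a_i)!. *)
Lemma prod_fact_dvd (I : Type) (s : seq I) (F : I -> nat) :
  (\prod_(i <- s) (F i)`! %| (\sum_(i <- s) F i)`!)%N.
Proof.
elim: s => [|a s IH]; first by rewrite !big_nil.
rewrite !big_cons; apply: (dvdn_trans (dvdn_mul (dvdnn _) IH)).
by rewrite -(bin_fact (leq_addr (\sum_(j <- s) F j) (F a))) addKn dvdn_mull.
Qed.

Section Weight.
Variables (K : numFieldType) (k : nat).

Lemma prod_fact_neq0 (F : 'I_k -> nat) : (\prod_i (F i)`!)%N%:R != 0 :> K.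
Proof. by rewrite pnatr_eq0 -lt0n prodn_gt0 // => i; rewrite fact_gt0. Qed.

Lemma multinom_weight n (v m : mindex k) : (mtot v <= n)%N -> (forall i, v i <= m i)%N ->
  (multinom n v)%:R / (\prod_i (m i - v i)`!)%N%:R =
  ((\prod_i (m i)`!)%N%:R)^-1 * (n ^_ (mtot v) * \prod_i 'C(m i, v i))%N%:R :> K.
Proof.
move=> levn levm.
have fact_neq0 j : j`!%:R != 0 :> K by rewrite pnatr_eq0 -lt0n fact_gt0.
have multinom_dvd : (\prod_i (v i)`! * (n - mtot v)`! %| n`!)%N.
  by rewrite -(bin_fact levn) dvdn_mull // dvdn_mul // prod_fact_dvd.
rewrite /multinom natr_div // ?unitfE ?natrM ?mulf_neq0 ?prod_fact_neq0 //.
have factm : (\prod_i (m i)`! =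
    \prod_i 'C(m i, v i) * (\prod_i (v i)`! * \prod_i (m i - v i)`!))%N.
  by rewrite -!big_split /=; apply: eq_bigr => i _; rewrite bin_fact.
rewrite -(ffact_fact levn) factm !natrM.
have nz_bin : (\prod_i 'C(m i, v i))%N%:R != 0 :> K.
  by rewrite pnatr_eq0 -lt0n prodn_gt0 // => i; rewrite bin_gt0.
field.
by rewrite nz_bin fact_neq0 !prod_fact_neq0.
Qed.

End Weight.

Section Assembly.
Variables (K : numFieldType) (r k : nat).
Local Notation MX := 'M[K]_r.+1.
Variables (B C : 'I_k -> MX).
Hypothesis commB : forall i j, GRing.comm (B i) (B j).
Hypothesis commC : forall i j, GRing.comm (C i) (C j).
Hypothesis unitC : forall i (j : nat), C i + j%:R \is a GRing.unit.

(* The coefficient of x^m in one summand of the right-hand side, in a uniform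
   form: when v is not <= m both sides vanish, since some C(m_i, v_i) is 0. *)
Lemma shifted_term n (G : MX) (w : K) (v m : mindex k) :
  (forall i, GRing.comm G (B i)) -> (mtot v <= n)%N ->
  ((multinom n v)%:R * w) *: mono_mul (mxprod (fun i => mpoch (B i) (v i))) v
       (FA G (fun i => B i + ((v i)%:R)%:M) (fun i => C i + ((v i)%:R)%:M))
       (mxprod (fun i => mpochinv (C i) (v i))) m
  = ((\prod_i (m i)`!)%N%:R)^-1 *:
    (((\prod_i 'C(m i, v i))%N%:R * ((n ^_ (mtot v))%:R * w)) *:
      (mpoch G (mtot m - mtot v) *m mxprod (fun i => mpoch (B i) (m i))
         *m mxprod (fun i => mpochinv (C i) (m i)))).
Proof.
move=> commGB levn.
have [/forallP levm | /forallPn [i /negP ltmv]] := boolP [forall i, (v i <= m i)%N].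
  rewrite mono_mul_FA // !scalerA; congr (_ *: _).
  by rewrite mulrAC multinom_weight // natrM; ring.
rewrite /mono_mul ifF; last by apply/negP => /forallP.
have -> : (\prod_j 'C(m j, v j) = 0)%N.
  by rewrite (bigD1 i) //= bin_small ?mul0n // ltnNge; apply/negP.
by rewrite mulr0n mul0r !scale0r !scaler0.
Qed.

Lemma assemble n (G : nat -> MX) (s : nat -> K) (W : mindex k -> K) (m : mindex k) :
  (forall N i, GRing.comm (G N) (B i)) ->
  (forall v, W v = (multinom n v)%:R * s (mtot v)) ->
  \sum_(nv : {ffun 'I_k -> 'I_n.+1} | (mtot [ffun i => (nv i : nat)] <= n)%N)
     W [ffun i => (nv i : nat)] *:
     mono_mul (mxprod (fun i => mpoch (B i) ([ffun i => (nv i : nat)] i)))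
       [ffun i => (nv i : nat)]
       (FA (G (mtot [ffun i => (nv i : nat)]))
           (fun i => B i + (([ffun i => (nv i : nat)] i)%:R)%:M)
           (fun i => C i + (([ffun i => (nv i : nat)] i)%:R)%:M))
       (mxprod (fun i => mpochinv (C i) ([ffun i => (nv i : nat)] i))) m
  = ((\prod_i (m i)`!)%N%:R)^-1 *:
    ((\sum_(N < n.+1) ((vcoef n (mtot m) N)%:R * s N) *: mpoch (G N) (mtot m - N))
      *m mxprod (fun i => mpoch (B i) (m i)) *m mxprod (fun i => mpochinv (C i) (m i))).
Proof.
move=> commGB defW.
have mtotE (f : {ffun 'I_k -> 'I_n.+1}) : mtot [ffun i => (f i : nat)] = (\sum_i (f i : nat))%N.
  by apply: eq_bigr => i _; rewrite ffunE.
under [X in _ = _ *: (X *m _ *m _)]eq_bigr => N _ do rewrite /vcoef mulnC natrM -mulrA -scalerA.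
rewrite -(@sum_by_total _ _ _ n m (fun N => ((n ^_ N)%:R * s N) *: mpoch (G N) (mtot m - N))).
rewrite !mulmx_suml scaler_sumr; apply: eq_big => [f | f lefn]; first by rewrite mtotE.
rewrite defW shifted_term -?mtotE //; congr (_ *: _).
rewrite -!scalemxAl scalerA; congr ((_%:R * _) *: _).
by apply: eq_bigr => i _; rewrite ffunE.
Qed.

End Assembly.

Section Transfer.
Variables (K : fieldType) (r : nat).
Local Notation MX := 'M[K]_r.+1.

Lemma horner_mx_shift (X : MX) (c : nat) : X + (c%:R)%:M = horner_mx X ('X + c%:R).
Proof. by rewrite rmorphD /= horner_mx_X !rmorph_nat. Qed.

Lemma mpoch_addn (X : MX) n M :
  mpoch (X + (n%:R)%:M) M = \sum_(N < n.+1) (vcoef n M N)%:R *: mpoch (X + (N%:R)%:M) (M - N).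
Proof.
rewrite horner_mx_shift mpoch_rising -rmorph_rising (rising_addn _ _ (ltnSn n)) rmorph_sum.
apply: eq_bigr => N _; rewrite rmorphM rmorph_nat rmorph_rising.
by rewrite horner_mx_shift mpoch_rising scaler_nat mulr_natl.
Qed.

Lemma mpoch_subn (X : MX) n M :
  mpoch (X - (n%:R)%:M) M =
  \sum_(N < n.+1) ((vcoef n M N)%:R * (-1) ^+ N) *: mpoch X (M - N).
Proof.
have horner_sub : X - (n%:R)%:M = horner_mx X ('X - n%:R).
  by rewrite rmorphB /= horner_mx_X !rmorph_nat.
rewrite horner_sub mpoch_rising -rmorph_rising (rising_subn _ _ (ltnSn n)) rmorph_sum.
apply: eq_bigr => N _.
have hornerX : rising (horner_mx X 'X) (M - N) = mpoch X (M - N).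
  by rewrite horner_mx_X mpoch_rising.
rewrite !(rmorphM (horner_mx X)) rmorph_nat rmorphXn rmorphN1 rmorph_rising hornerX.
by rewrite -scalerA scaler_nat mulr_natl -mul_scalar_mx mulmxE rmorphXn rmorphN1.
Qed.

End Transfer.

Unset Implicit Arguments. Set Strict Implicit. Set Printing Implicit Defensive.

Theorem mainTheorem2 (R : realType) (r k : nat) (A : 'M[R[i]]_r)
  (B C : 'I_k -> 'M[R[i]]_r) (n : nat) :
  (1 <= k)%N ->
  (forall (i : 'I_k) (m : nat), C i + (m%:R)%:M \in unitmx) ->
  (forall i : 'I_k, A *m B i = B i *m A) ->
  (forall i j : 'I_k, B i *m B j = B j *m B i) ->
  (forall i j : 'I_k, C i *m C j = C j *m C i) ->
  (1 <= n)%N ->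
  (forall m : nat, A + (m%:R)%:M \in unitmx) ->
  (forall m : mindex k,
     FA (A + (n%:R)%:M) B C m =
     \sum_(nv : {ffun 'I_k -> 'I_n.+1} | (mtot [ffun i => (nv i : nat)] <= n)%N)
        let nv' := [ffun i => (nv i : nat)] in
        (multinom n nv')%:R *:
          mono_mul (mxprod (fun i => mpoch (B i) (nv' i))) nv'
            (FA (A + ((mtot nv')%:R)%:M)
                (fun i => B i + ((nv' i)%:R)%:M)
                (fun i => C i + ((nv' i)%:R)%:M))
            (mxprod (fun i => mpochinv (C i) (nv' i))) m)
  /\
  ((forall n1 : nat, (n1 <= n)%N -> A - (n1%:R)%:M \in unitmx) ->
   forall m : mindex k,
     FA (A - (n%:R)%:M) B C m =
     \sum_(nv : {ffun 'I_k -> 'I_n.+1} | (mtot [ffun i => (nv i : nat)] <= n)%N)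
        let nv' := [ffun i => (nv i : nat)] in
        ((multinom n nv')%:R * (-1) ^+ (mtot nv')) *:
          mono_mul (mxprod (fun i => mpoch (B i) (nv' i))) nv'
            (FA A
                (fun i => B i + ((nv' i)%:R)%:M)
                (fun i => C i + ((nv' i)%:R)%:M))
            (mxprod (fun i => mpochinv (C i) (nv' i))) m).
Proof.
move=> _ unitC commAB commB commC _ _.
(* Empty matrices are trivial; otherwise the r x r matrices form a ring. *)
case: r A B C unitC commAB commB commC => [|r] A B C unitC commAB commB commC.
  by split=> [m|_ m]; apply/matrixP => -[].
have unitC' i (j : nat) : C i + j%:R \is a GRing.unit by rewrite -scalar_mx_nat.
have commShiftB N i : GRing.comm (A + (N%:R)%:M) (B i).
  exact/commr_sym/comm_shift/commr_sym/commAB.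
split=> [m | _ m].
  apply: (eq_trans _ (esym (assemble commB commC unitC' (s := fun=> 1)
    (W := fun v => (multinom n v)%:R) m commShiftB (fun v => esym (mulr1 _))))).
  by rewrite /FA mpoch_addn; congr (_ *: (_ *m _ *m _)); apply: eq_bigr => N _; rewrite mulr1.
apply: (eq_trans _ (esym (assemble commB commC unitC' (G := fun=> A)
  (s := fun N => (-1) ^+ N) m (fun _ => commAB) (fun v => erefl)))).
by rewrite /FA mpoch_subn.
Qed.
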